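(* Let $n\ge 1$, $N=\{1,\dots,n\}$, $A=[0,1]$, and let $f$ be an OWA mechanism with weights $w_1,\dots,w_n\in[0,1]$, $\sum_j w_j=1$. Then $f$ satisfies individual fair share (IFS) if and only if $w_1 \ge \frac1n$ and $w_n \ge \frac1n$.
   Context: A mechanism is a map $f:A^n\to A$ from profiles $x=(x_i)_{i\in N}$ of reported locations to a facility location. An OWA mechanism with weights $w_1,\dots,w_n$ returns $f(x)=\sum_{j=1}^n w_j x_{\pi(j)}$, where $\pi$ is a permutation of $N$ with $x_{\pi(1)}\le\dots\le x_{\pi(n)}$. The mechanism $f$ satisfies IFS if for every profile $x\in A^n$ and every $i\in N$, $|x_i - f(x)| \le 1-\frac1n$. *)

From mathcomp Require Import all_boot all_order all_algebra.
From mathcomp Require Import reals.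
Set Implicit Arguments. Unset Strict Implicit. Unset Printing Implicit Defensive.
Import Order.TTheory GRing.Theory Num.Theory.
Local Open Scope ring_scope.

(* Agents N = 'I_n (agent i+1 of the paper is i : 'I_n); domain A = [0,1]. *)
Definition in_A (R : realType) (a : R) : bool := (0 <= a) && (a <= 1).

Definition profile_in_A (R : realType) (n : nat) (x : 'I_n -> R) : Prop :=
  forall i, in_A (x i).

Definition sorted_profile (R : realType) (n : nat) (x : 'I_n -> R) : seq R :=
  sort <=%R [seq x i | i <- enum 'I_n].

(* OWA mechanism with weights w = [:: w_1; ...; w_n] (w`_j is w_{j+1}). *)
Definition owa (R : realType) (n : nat) (w : seq R) (x : 'I_n -> R) : R :=
  \sum_(j < n) w`_j * (sorted_profile x)`_j.

Definition IFS (R : realType) (n : nat) (f : ('I_n -> R) -> R) : Prop :=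
  forall x : 'I_n -> R, profile_in_A x ->
    forall i : 'I_n, `|x i - f x| <= 1 - n%:R^-1.

(** For a profile in [0,1]^n with smallest report s_min and largest s_max, the
    OWA outcome is at most w_1 s_min + (1 - w_1) and at least w_n s_max, so every
    report is within max (1 - w_1, 1 - w_n) of it.  The bound is attained by the
    profiles (0, 1, ..., 1) and (0, ..., 0, 1), at the agent standing alone. *)

From mathcomp Require Import all_boot all_order all_algebra.
From mathcomp Require Import reals.
From mathcomp Require Import lra.
Import Order.TTheory GRing.Theory Num.Theory.
Local Open Scope ring_scope.

Section WeightedSum.
Context {R : numDomainType} {k : nat} {w s : seq R}.
Hypothesis w_ge0 : forall j, (j < k.+1)%N -> 0 <= w`_j.
Hypothesis w_sum1 : \sum_(j < k.+1) w`_j = 1.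

Lemma wsum_le_head : (forall j, (j < k.+1)%N -> s`_j <= 1) ->
  \sum_(j < k.+1) w`_j * s`_j <= w`_0 * s`_0 + (1 - w`_0).
Proof.
move=> s_le1; rewrite big_ord_recl lerD2l.
have -> : 1 - w`_0 = \sum_(j < k) w`_(bump 0 j).
  by rewrite -w_sum1 big_ord_recl addrC addKr.
apply: ler_sum => j _; rewrite ler_piMr ?w_ge0 ?s_le1 //.
Qed.

Lemma wsum_ge_last : (forall j, (j < k.+1)%N -> 0 <= s`_j) ->
  w`_k * s`_k <= \sum_(j < k.+1) w`_j * s`_j.
Proof.
move=> s_ge0; rewrite big_ord_recr lerDr /=.
by apply: sumr_ge0 => j _; rewrite mulr_ge0 ?w_ge0 ?s_ge0 // ltnW ?ltnS.
Qed.

End WeightedSum.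

Section SortedProfile.
Context {R : realType} {n : nat} (x : 'I_n -> R).

Lemma sorted_profile_sorted : sorted <=%R (sorted_profile x).
Proof. exact/sort_sorted/le_total. Qed.

Lemma size_sorted_profile : size (sorted_profile x) = n.
Proof. by rewrite size_sort size_map size_enum_ord. Qed.

Lemma mem_sorted_profile i : x i \in sorted_profile x.
Proof. by rewrite mem_sort map_f ?mem_enum. Qed.

Lemma sorted_profile_in_A : profile_in_A x -> forall j, in_A (sorted_profile x)`_j.
Proof.
move=> xA j; have [lt_j_n|] := ltnP j (size (sorted_profile x)); last first.
  by move=> /(nth_default 0) ->; rewrite /in_A lexx ler01.
by have /mapP[i _ ->] : (sorted_profile x)`_j \in [seq x i | i <- enum 'I_n]
  by rewrite -(mem_sort <=%R) mem_nth.
Qed.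

Lemma sorted_profile_bounds i :
  (sorted_profile x)`_0 <= x i <= (sorted_profile x)`_n.-1.
Proof.
have idx_lt : (index (x i) (sorted_profile x) < n)%N.
  by rewrite -[X in (_ < X)%N]size_sorted_profile index_mem mem_sorted_profile.
have n_gt0 : (0 < n)%N := leq_ltn_trans (leq0n i) (ltn_ord i).
have /= le_nth := sorted_leq_nth le_trans lexx 0 sorted_profile_sorted.
rewrite -{1 2}(nth_index 0 (mem_sorted_profile i)).
by rewrite !le_nth ?inE ?size_sorted_profile ?ltn_predL // -ltnS prednK.
Qed.

Lemma nth_sorted_profile_mono : {homo x : i j / (i <= j)%N >-> i <= j} ->
  forall j : 'I_n, (sorted_profile x)`_j = x j.
Proof.
move=> x_mono j; rewrite /sorted_profile sorted_sort; last first.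
- apply: (homo_sorted (e := relpre val leq)); first exact: x_mono.
  by rewrite -sorted_map val_enum_ord iota_sorted.
- exact: le_trans.
by rewrite (nth_map j) ?size_enum_ord // nth_ord_enum.
Qed.

End SortedProfile.

Definition step_profile (R : realType) (n m : nat) : 'I_n -> R :=
  fun i => (m <= i)%:R.

Lemma step_profile_in_A (R : realType) n m : profile_in_A (@step_profile R n m).
Proof. by move=> i; rewrite /in_A /step_profile; case: leqP; rewrite ?lexx ?ler01. Qed.

Lemma owa_step_profile (R : realType) n (w : seq R) m :
  owa w (@step_profile R n m) = \sum_(j < n | (m <= j)%N) w`_j.
Proof.
rewrite /owa [RHS]big_mkcond; apply: eq_bigr => j _.
rewrite nth_sorted_profile_mono /step_profile ?mulr_natr ?mulrb // => a b le_ab.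
by case: leqP => [le_ma|]; rewrite ?(leq_trans le_ma le_ab) ?lexx ?ler01.
Qed.

Section OWA.
Context {R : realType} {k : nat} {w : seq R}.
Hypothesis w_in_A : forall {j}, (j < k.+1)%N -> in_A w`_j.
Hypothesis w_sum1 : \sum_(j < k.+1) w`_j = 1.

Let w_ge0 j : (j < k.+1)%N -> 0 <= w`_j.
Proof. by move=> /w_in_A /andP[]. Qed.

Lemma owa_dist_le (x : 'I_k.+1 -> R) i : profile_in_A x ->
  `|x i - owa w x| <= Num.max (1 - w`_0) (1 - w`_k).
Proof.
move=> xA; have /andP[s0_le_xi xi_le_sk] := sorted_profile_bounds x i.
rewrite /owa; set s := sorted_profile x in s0_le_xi xi_le_sk *.
have s_ge0 j : 0 <= s`_j by case/andP: (sorted_profile_in_A x xA j).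
have s_le1 j : s`_j <= 1 by case/andP: (sorted_profile_in_A x xA j).
have f_le := wsum_le_head w_ge0 w_sum1 (fun j _ => s_le1 j).
have f_ge := wsum_ge_last w_ge0 (fun j _ => s_ge0 j).
have s0_ge0 := s_ge0 0%N; have sk_le1 := s_le1 k.
have /andP[_ w0_le1] := w_in_A (ltn0Sn k); have /andP[_ wk_le1] := w_in_A (ltnSn k).
rewrite /= in xi_le_sk; apply/ler_normlP; split; rewrite le_max; apply/orP.
- by left; nra.
- by right; nra.
Qed.

Lemma owa_step_head : owa w (@step_profile R k.+1 1) = 1 - w`_0.
Proof.
rewrite owa_step_profile; move: w_sum1; rewrite (bigD1 ord0) //= => <-.
rewrite (addrC w`_0) addrK.
by apply: eq_bigl => j; rewrite lt0n -(inj_eq val_inj).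
Qed.

Lemma owa_step_last : owa w (@step_profile R k.+1 k) = w`_k.
Proof.
rewrite owa_step_profile (big_pred1 ord_max) // => j.
by rewrite /= -(inj_eq val_inj) /= eqn_leq leq_ord.
Qed.

End OWA.

Theorem theorem3 (R : realType) (n : nat) (hn : (1 <= n)%N) (w : seq R)
  (hsize : size w = n)
  (hw01 : forall j : nat, (j < n)%N -> in_A w`_j)
  (hsum : \sum_(j < n) w`_j = 1) :
  IFS (@owa R n w) <-> (n%:R^-1 <= w`_0 /\ n%:R^-1 <= w`_(n.-1)).
Proof.
case: n hn hsize hw01 hsum => // k _ _ w_in_A w_sum1 /=.
rewrite /IFS; set c := k.+1%:R^-1; split=> [ifs | [w0_ge wk_ge] x xA i].
- have := ifs _ (step_profile_in_A _ _ 1) ord0.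
  have := ifs _ (step_profile_in_A _ _ k) ord_max.
  rewrite owa_step_head // owa_step_last // /step_profile leqnn /=.
  by move=> /ler_normlP[_ ?] /ler_normlP[? _]; split; lra.
- apply: le_trans (owa_dist_le w_in_A w_sum1 x i xA) _.
  by rewrite ge_max; apply/andP; split; lra.
Qed.
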